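(* Let $u,\gamma,\lambda_A,\lambda_{CCN},\lambda_{CP}>0$, $\mu\in(0,1]$, $\varpi\in\mathbb{R}$, $T>0$, let $F$ be a differentiable cumulative distribution function and $G$ a continuous cumulative distribution function. Let $D:[0,T]\to\mathbb{R}$ be differentiable with $D(0)=u-\varpi$, let $b(r)=e^{-\gamma r}u-D(r)$ (assumed continuous), and set $W(x)=e^{\lambda_{CCN}(F(x)-1)}\big(1-e^{\lambda_{CP}(G(x)-1)}\big)$ and \[ \mathrm{Pay}(r)=\big(1-e^{\lambda_{CP}(G(b(r))-1)}\big)\Big[e^{-\lambda_{CCN}}b(T)+\int_{b(T)}^{b(r)}\lambda_{CCN}e^{\lambda_{CCN}(F(x)-1)}\,x\,F'(x)\,dx\Big]. \] Suppose that for every $r\in(0,T]$ and every sufficiently small $\delta>0$ (with $\delta\mu\lambda_A<1$), \[ D(r)=\frac{1}{1+\gamma\delta}\Big[\big(1-\mu\lambda_A\delta\,W(b(r))\big)D(r-\delta)+\mu\lambda_A\delta\big(W(b(r))e^{-\gamma r}u-\mathrm{Pay}(r)\big)\Big]. \] Then for every $r\in(0,T]$, \[ \gamma D(r)=-D'(r)+\mu\lambda_A\Big(W(b(r))\big(e^{-\gamma r}u-D(r)\big)-\mathrm{Pay}(r)\Big). \]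
   Context: Model (second-price auction market between cloud managers and private cloud providers): auctions occur at Poisson rate $\lambda_A$; a fraction $\mu$ of managers bid actively; the number of competing managers is Poisson with mean $\lambda_{CCN}$ and the number of providers Poisson with mean $\lambda_{CP}$; $F$ is the stationary cdf of managers' bids, $G$ the cdf of providers' offered prices; $T$ is the total participation time and $r$ the residual participation time; a manager bids $b(r)=e^{-\gamma r}u-D(r)$, with $u$ the utility, $\gamma$ the rate of time preference and $D(r)$ the discounted expected utility; $W(b)$ is the probability of winning with at least one provider offering a lower price; the winner pays the second-highest bid, whose expected value is $\mathrm{Pay}(r)$; at $r=0$ the manager buys at flat price $\varpi$, so $D(0)=u-\varpi$. *)

From Stdlib Require Import Reals.
From Coquelicot Require Import Coquelicot.
Open Scope R_scope.

Definition is_cdf (F : R -> R) : Prop :=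
  (forall x y, x <= y -> F x <= F y) /\
  (forall x, filterlim F (at_right x) (locally (F x))) /\
  is_lim F m_infty 0 /\
  is_lim F p_infty 1.

Definition is_derive_on (f : R -> R) (a b x l : R) : Prop :=
  filterlim (fun h => (f (x + h) - f x) / h)
    (within (fun h => h <> 0 /\ a <= x + h <= b) (locally 0))
    (locally l).

Definition Wfun (lCCN lCP : R) (F G : R -> R) (x : R) : R :=
  exp (lCCN * (F x - 1)) * (1 - exp (lCP * (G x - 1))).

Definition Payfun (lCCN lCP T : R) (F F' G b : R -> R) (r : R) : R :=
  (1 - exp (lCP * (G (b r) - 1))) *
  (exp (- lCCN) * b T +
   RInt (fun x => lCCN * exp (lCCN * (F x - 1)) * x * F' x) (b T) (b r)).

(* Read the recursion with a backward step -delta: it is an implicit Euler scheme, so it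
   expresses the backward difference quotient (D r - D (r - delta)) / delta as an affine
   function of D (r - delta).  As delta -> 0+ the quotient tends to the (one-sided)
   derivative D' r, and D (r - delta) tends to D r because D is differentiable; comparing
   the two limits gives the differential equation. *)
From Stdlib Require Import Reals Lra.
From Coquelicot Require Import Coquelicot.
Open Scope R_scope.

Definition diff_quot (f : R -> R) (x h : R) : R := (f (x + h) - f x) / h.

Lemma at_left_0_interval (e : R) : 0 < e -> at_left 0 (fun h => - e < h < 0).
Proof.
  intros He. exists (mkposreal e He). intros h Hball Hneg. split; [|exact Hneg].
  unfold ball in Hball; simpl in Hball.
  unfold AbsRing_ball, abs, minus, plus, opp in Hball; simpl in Hball.
  rewrite Ropp_0, Rplus_0_r in Hball.
  now apply Rabs_def2 in Hball.
Qed.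

Lemma is_derive_on_at_left (f : R -> R) (a b x l : R) :
  a < x <= b -> is_derive_on f a b x l ->
  filterlim (diff_quot f x) (at_left 0) (locally l).
Proof.
  intros Hx Hf. eapply filterlim_filter_le_1; [|exact Hf].
  intros P HP.
  assert (HP_left : at_left 0 (fun h => (h <> 0 /\ a <= x + h <= b) -> P h))
    by now apply filter_le_within.
  apply (filter_imp (fun h => ((h <> 0 /\ a <= x + h <= b) -> P h) /\ - (x - a) < h < 0)).
  - intros h [HPh Hh]. apply HPh. lra.
  - apply filter_and; [exact HP_left | apply at_left_0_interval; lra].
Qed.

Lemma diff_quot_at_left_continuous (f : R -> R) (x l : R) :
  filterlim (diff_quot f x) (at_left 0) (locally l) ->
  filterlim (fun h => f (x + h)) (at_left 0) (locally (f x)).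
Proof.
  intros Hq.
  assert (Hid : filterlim (fun h : R => h) (at_left 0) (locally 0)).
  { eapply filterlim_filter_le_1; [apply filter_le_within | apply filterlim_id]. }
  pose proof (filterlim_comp_2 _ _ Rmult Hid Hq (filterlim_mult 0 l)) as Hprod.
  rewrite Rmult_0_l in Hprod.
  pose proof (filterlim_comp_2 _ _ Rplus (filterlim_const (f x)) Hprod
                (filterlim_plus (f x) 0)) as Hsum.
  rewrite Rplus_0_r in Hsum.
  eapply filterlim_ext_loc; [|exact Hsum].
  eapply filter_imp; [|exact (at_left_0_interval 1 Rlt_0_1)].
  intros h Hh. unfold diff_quot. field. lra.
Qed.

Lemma backward_scheme_derivative (f : R -> R) (x l A B : R) :
  filterlim (diff_quot f x) (at_left 0) (locally l) ->
  (exists d0, 0 < d0 /\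
     forall d, 0 < d < d0 -> (f x - f (x - d)) / d = A + B * f (x - d)) ->
  l = A + B * f x.
Proof.
  intros Hq [d0 [Hd0 Hscheme]].
  apply (filterlim_locally_unique (diff_quot f x) _ _ Hq).
  apply (filterlim_ext_loc (fun h => A + B * f (x + h))).
  - apply (filter_imp (fun h => - d0 < h < 0)); [|now apply at_left_0_interval].
    intros h Hh. unfold diff_quot.
    specialize (Hscheme (- h) ltac:(lra)).
    replace (x - - h) with (x + h) in Hscheme by ring.
    rewrite <- Hscheme. field. lra.
  - apply (filterlim_comp _ _ _ (fun h => f (x + h)) (fun y => A + B * y)
             _ (locally (f x))); [exact (diff_quot_at_left_continuous _ _ _ Hq)|].
    apply (proj1 (continuity_pt_filterlim (fun y => A + B * y) (f x))). reg.
Qed.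

Lemma implicit_euler_step_slope (y0 y1 g c w q d : R) :
  0 < d -> 0 < 1 + g * d ->
  y1 = / (1 + g * d) * ((1 - c * d * w) * y0 + c * d * q) ->
  (y1 - y0) / d = (- g * y1 + c * q) + (- c * w) * y0.
Proof.
  intros Hd Hgd Hy1.
  assert (Hcleared : y1 * (1 + g * d) = (1 - c * d * w) * y0 + c * d * q)
    by (rewrite Hy1; field; lra).
  apply (Rmult_eq_reg_r d); [|lra].
  replace ((y1 - y0) / d * d) with (y1 - y0) by (field; lra).
  nra.
Qed.

Theorem theorem2
  (u gamma lA lCCN lCP mu varpi T : R)
  (F F' G D D' : R -> R)
  (hu : 0 < u) (hgamma : 0 < gamma) (hlA : 0 < lA) (hlCCN : 0 < lCCN)
  (hlCP : 0 < lCP) (hmu : 0 < mu <= 1) (hT : 0 < T)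
  (hFcdf : is_cdf F) (hF' : forall x, is_derive F x (F' x))
  (hGcdf : is_cdf G) (hGcont : forall x, continuous G x)
  (hD : forall r, 0 <= r <= T -> is_derive_on D 0 T r (D' r))
  (hD0 : D 0 = u - varpi)
  (hbcont : forall r, 0 <= r <= T ->
     filterlim (fun s => exp (- gamma * s) * u - D s)
       (within (fun s => 0 <= s <= T) (locally r))
       (locally (exp (- gamma * r) * u - D r)))
  (hrec : forall r, 0 < r <= T ->
     exists delta0, 0 < delta0 /\
     forall delta, 0 < delta < delta0 -> delta <= r -> delta * mu * lA < 1 ->
       let b := fun s => exp (- gamma * s) * u - D s in
       D r = / (1 + gamma * delta) *
         ((1 - mu * lA * delta * Wfun lCCN lCP F G (b r)) * D (r - delta) +
          mu * lA * delta *
            (Wfun lCCN lCP F G (b r) * exp (- gamma * r) * u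
             - Payfun lCCN lCP T F F' G b r))) :
  forall r, 0 < r <= T ->
    let b := fun s => exp (- gamma * s) * u - D s in
    gamma * D r =
      - D' r + mu * lA *
        (Wfun lCCN lCP F G (b r) * (exp (- gamma * r) * u - D r)
         - Payfun lCCN lCP T F F' G b r).
Proof.
  intros r hr b.
  set (c := mu * lA).
  set (W := Wfun lCCN lCP F G (b r)).
  set (P := Payfun lCCN lCP T F F' G b r).
  assert (hc : 0 < c) by (unfold c; nra).
  assert (hscheme : exists d0, 0 < d0 /\ forall d, 0 < d < d0 ->
            (D r - D (r - d)) / d =
              (- gamma * D r + c * (W * exp (- gamma * r) * u - P)) + (- c * W) * D (r - d)).
  { destruct (hrec r hr) as [d0 [hd0 hstep]].
    exists (Rmin d0 (Rmin r (/ c))).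
    split; [apply Rmin_pos; [lra | apply Rmin_pos; [lra | now apply Rinv_0_lt_compat]]|].
    intros d hd.
    pose proof (Rmin_l d0 (Rmin r (/ c))). pose proof (Rmin_r d0 (Rmin r (/ c))).
    pose proof (Rmin_l r (/ c)). pose proof (Rmin_r r (/ c)).
    assert (hdc : d * c < 1).
    { assert (hcinv : / c * c = 1) by (field; lra). nra. }
    apply implicit_euler_step_slope; [lra | nra |].
    exact (hstep d ltac:(lra) ltac:(lra) ltac:(unfold c in hdc; lra)). }
  assert (hleft := is_derive_on_at_left D 0 T r (D' r) ltac:(lra) (hD r ltac:(lra))).
  rewrite (backward_scheme_derivative _ _ _ _ _ hleft hscheme).
  ring.
Qed.
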